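(* Let $\mathcal{X}$ be a finite-dimensional real Hilbert space, $\rho\in\mathbb{R}$, and $f:\mathcal{X}\to\mathbb{R}$ $\rho$-convex. Let $(x^i)_{i\ge1}\subset\mathcal{X}$, $\bar x^i:=\frac1i\sum_{j=1}^i x^j$, and for $N\in\mathbb{N}$ let $\bar f:=\frac1N\sum_{i=1}^N f(x^i)$. Then for all $N\in\mathbb{N}$, \[ f(\bar x^N)\le\bar f-\frac{\rho}{2N}\sum_{i=1}^N\frac{i-1}{i}\|x^i-\bar x^{i-1}\|^2, \] and moreover for every $x\in\mathcal{X}$, \[ f(\bar x^N)\le\bar f+\max(0,-\rho)\left[\frac1N\sum_{i=1}^N\|x^i-x\|^2+\frac1N\sum_{i=1}^N\frac1i\sum_{j=1}^{i-1}\|x^j-x\|^2\right]. \]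
   Context: $f$ is $\rho$-convex if $f-\frac{\rho}{2}\|\cdot\|^2$ is convex. The $i=1$ term in the first sum has coefficient $0$ (so $\bar x^0$ plays no role). *)

(* The finite-dimensional real Hilbert space X is modelled as
   R^n = 'rV[R]_n with the Euclidean inner product (every finite-dimensional real
   Hilbert space is isometrically isomorphic to such a space). *)
From HB Require Import structures.
From mathcomp Require Import all_boot all_order all_algebra.
From mathcomp Require Import reals.
Set Implicit Arguments. Unset Strict Implicit. Unset Printing Implicit Defensive.
Import Order.TTheory GRing.Theory Num.Theory.
Local Open Scope ring_scope.

Definition dotv {R : realType} {n : nat} (u v : 'rV[R]_n) : R :=
  \sum_(k < n) u 0 k * v 0 k.
Definition sqnorm {R : realType} {n : nat} (v : 'rV[R]_n) : R := dotv v v.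

Definition convex_fun {R : realType} {n : nat} (g : 'rV[R]_n -> R) : Prop :=
  forall (x y : 'rV[R]_n) (t : R), 0 <= t -> t <= 1 ->
    g (t *: x + (1 - t) *: y) <= t * g x + (1 - t) * g y.

Definition rho_convex {R : realType} {n : nat} (rho : R) (f : 'rV[R]_n -> R) : Prop :=
  convex_fun (fun x => f x - rho / 2 * sqnorm x).

(* running average xbar i = (1/i) sum_{j=1}^i x^j (the sequence is indexed from 1;
   x 0 is unused); xbar 0 = 0 by this formula and plays no role. *)
Definition xbar {R : realType} {n : nat} (x : nat -> 'rV[R]_n) (i : nat) : 'rV[R]_n :=
  (i%:R)^-1 *: \sum_(1 <= j < i.+1) x j.

(* A rho-convex f satisfies the strong-convexity inequality
   f(t a + (1-t) b) <= t f a + (1-t) f b - rho/2 t(1-t) |a - b|^2.  Since the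
   running averages obey xbar_(m+1) = 1/(m+1) x_(m+1) + m/(m+1) xbar_m, applying
   it at every step and telescoping gives the first bound.  For the second,
   the same bound for the convex function |. - z|^2 is Jensen's inequality
   m |xbar_m - z|^2 <= sum_(j <= m) |x_j - z|^2, which together with
   |u - v|^2 <= 2|u|^2 + 2|v|^2 controls each defect term by distances to z;
   the defect only matters when rho < 0, whence the factor max(0, -rho). *)
From HB Require Import structures.
From mathcomp Require Import all_boot all_order all_algebra.
From mathcomp Require Import reals.
From mathcomp Require Import ring lra.
Set Implicit Arguments. Unset Strict Implicit. Unset Printing Implicit Defensive.
Import Order.TTheory GRing.Theory Num.Theory.
Local Open Scope ring_scope.

Section RunningAverage.
Variables (R : realType) (n : nat).
Implicit Types (a b u v z : 'rV[R]_n) (x : nat -> 'rV[R]_n).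

Lemma sqnorm_ge0 u : 0 <= sqnorm u.
Proof. by apply: sumr_ge0 => k _; rewrite -expr2 sqr_ge0. Qed.

Lemma sqnormB_le u v : sqnorm (u - v) <= 2 * sqnorm u + 2 * sqnorm v.
Proof.
rewrite /sqnorm /dotv !mulr_sumr -big_split /=.
apply: ler_sum => k _; rewrite !mxE.
have := sqr_ge0 (u 0 k + v 0 k); rewrite expr2; nra.
Qed.

Lemma sqnorm_convex_comb (t : R) a b :
  sqnorm (t *: a + (1 - t) *: b) =
  t * sqnorm a + (1 - t) * sqnorm b - t * (1 - t) * sqnorm (a - b).
Proof.
rewrite /sqnorm /dotv !mulr_sumr -sumrN -!big_split /=.
by apply: eq_bigr => k _; rewrite !mxE; ring.
Qed.

Lemma rho_convex_comb (rho : R) (f : 'rV[R]_n -> R) (t : R) a b :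
  rho_convex rho f -> 0 <= t -> t <= 1 ->
  f (t *: a + (1 - t) *: b) <=
  t * f a + (1 - t) * f b - rho / 2 * (t * (1 - t)) * sqnorm (a - b).
Proof.
move=> fconv t0 t1; have := fconv a b t t0 t1; rewrite /= sqnorm_convex_comb.
move: (sqnorm a) (sqnorm b) (sqnorm (a - b)) (rho / 2) => sa sb sab r; nra.
Qed.

Lemma convex_rho_convex0 (g : 'rV[R]_n -> R) : convex_fun g -> rho_convex 0 g.
Proof. by move=> gconv a b t t0 t1 /=; rewrite !mul0r !subr0; exact: gconv. Qed.

Lemma convex_sqnormB z : convex_fun (fun v => sqnorm (v - z)).
Proof.
move=> a b t t0 t1 /=.
have -> : t *: a + (1 - t) *: b - z = t *: (a - z) + (1 - t) *: (b - z).
  by rewrite !scalerBr addrACA -opprD -scalerDl (addrC t) subrK scale1r.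
rewrite sqnorm_convex_comb gerBl mulr_ge0 ?sqnorm_ge0 //.
by rewrite mulr_ge0 // subr_ge0.
Qed.

Lemma xbarS x m :
  xbar x m.+1 = (m.+1%:R)^-1 *: x m.+1 + (1 - (m.+1%:R)^-1) *: xbar x m.
Proof.
case: m => [|m]; first by rewrite /xbar invr1 subrr scale0r addr0 big_nat1 scale1r.
rewrite /xbar big_nat_recr //= scalerDr addrC scalerA; congr (_ + _ *: _).
have m1_neq0 : (m.+1%:R : R) != 0 by rewrite pnatr_eq0.
have m2_neq0 : (m.+2%:R : R) != 0 by rewrite pnatr_eq0.
by rewrite !mulrSr in m1_neq0 m2_neq0 *; field; rewrite m2_neq0 m1_neq0.
Qed.

Definition xbar_defect x m : R :=
  \sum_(1 <= i < m.+1) ((i%:R - 1) / i%:R) * sqnorm (x i - xbar x i.-1).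

Lemma xbar_defect_ge0 x m : 0 <= xbar_defect x m.
Proof.
rewrite /xbar_defect big_nat_cond; apply: sumr_ge0 => i /andP[/andP[i_ge1 _] _].
by rewrite mulr_ge0 ?sqnorm_ge0 // divr_ge0 ?ler0n // subr_ge0 ler1n.
Qed.

Lemma rho_convex_xbar (rho : R) (f : 'rV[R]_n -> R) x m :
  rho_convex rho f ->
  m%:R * f (xbar x m) <= \sum_(1 <= i < m.+1) f (x i) - rho / 2 * xbar_defect x m.
Proof.
move=> fconv; rewrite /xbar_defect.
elim: m => [|m IH]; first by rewrite !big_geq // mul0r mulr0 subrr.
rewrite !(big_nat_recr m.+1 1) //= xbarS.
set t := (m.+1%:R : R)^-1.
have m1_gt0 : (0 : R) < m.+1%:R by rewrite ltr0n.
have t0 : 0 <= t by rewrite invr_ge0 ltW.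
have t1 : t <= 1 by rewrite invf_le1 // ler1n.
have step := rho_convex_comb (x m.+1) (xbar x m) fconv t0 t1.
have {step} := ler_wpM2l (ltW m1_gt0) step.
have -> : m.+1%:R * (t * f (x m.+1) + (1 - t) * f (xbar x m)
            - rho / 2 * (t * (1 - t)) * sqnorm (x m.+1 - xbar x m))
          = f (x m.+1) + m%:R * f (xbar x m)
            - rho / 2 * ((m.+1%:R - 1) * t * sqnorm (x m.+1 - xbar x m)).
  by rewrite /t mulrSr; field; rewrite -mulrSr lt0r_neq0.
move: IH; rewrite mulrDr; lra.
Qed.

Lemma sqnorm_xbar_le x z m :
  m%:R * sqnorm (xbar x m - z) <= \sum_(1 <= j < m.+1) sqnorm (x j - z).
Proof.
have := rho_convex_xbar x m (convex_rho_convex0 (convex_sqnormB z)).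
by rewrite mul0r mul0r subr0.
Qed.

Lemma xbar_defect_term_le x z k :
  (k.+1%:R - 1) / k.+1%:R * sqnorm (x k.+1 - xbar x k) <=
  2 * sqnorm (x k.+1 - z) + 2 * ((k.+1%:R)^-1 * \sum_(1 <= j < k.+1) sqnorm (x j - z)).
Proof.
have jensen := sqnorm_xbar_le x z k.
have split_z : sqnorm (x k.+1 - xbar x k)
    <= 2 * sqnorm (x k.+1 - z) + 2 * sqnorm (xbar x k - z).
  have -> : x k.+1 - xbar x k = (x k.+1 - z) - (xbar x k - z).
    by rewrite opprB addrA subrK.
  exact: sqnormB_le.
have dist_ge0 := sqnorm_ge0 (x k.+1 - z).
have k_ge0 : (0 : R) <= k%:R by rewrite ler0n.
rewrite mulrSr addrK; move: split_z dist_ge0 jensen k_ge0.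
move: (sqnorm (x k.+1 - xbar x k)) (sqnorm (x k.+1 - z)) (sqnorm (xbar x k - z)).
move: (\sum_(_ <= _ < _) _) (k%:R) => S K s a w.
move=> split_z a_ge0 jensen K_ge0.
have K1_neq0 : K + 1 != 0 by rewrite lt0r_neq0 ?ltr_wpDl.
have -> : K / (K + 1) * s = (K + 1)^-1 * (K * s) by field.
have -> : 2 * a + 2 * ((K + 1)^-1 * S) = (K + 1)^-1 * (2 * (K + 1) * a + 2 * S).
  by field.
rewrite ler_pM2l ?invr_gt0 ?ltr_wpDl //; nra.
Qed.

Lemma xbar_defect_le x z m :
  xbar_defect x m <= 2 * (\sum_(1 <= i < m.+1) sqnorm (x i - z)
    + \sum_(1 <= i < m.+1) ((i%:R)^-1 * \sum_(1 <= j < i) sqnorm (x j - z))).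
Proof.
rewrite /xbar_defect mulrDr !mulr_sumr -big_split /=.
apply: ler_sum_nat => -[|k] //= _; exact: xbar_defect_term_le.
Qed.

End RunningAverage.

Theorem mainTheorem10 (R : realType) (n : nat) (rho : R) (f : 'rV[R]_n -> R)
    (x : nat -> 'rV[R]_n) (N : nat) :
  rho_convex rho f -> (1 <= N)%N ->
  let fbar := (N%:R)^-1 * \sum_(1 <= i < N.+1) f (x i) in
  f (xbar x N) <= fbar - rho / (2 * N%:R) *
      \sum_(1 <= i < N.+1) ((i%:R - 1) / i%:R) * sqnorm (x i - xbar x i.-1)
  /\
  forall z : 'rV[R]_n,
    f (xbar x N) <= fbar + Num.max 0 (- rho) *
      ((N%:R)^-1 * \sum_(1 <= i < N.+1) sqnorm (x i - z)
       + (N%:R)^-1 * \sum_(1 <= i < N.+1)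
            ((i%:R)^-1 * \sum_(1 <= j < i) sqnorm (x j - z))).
Proof.
move=> fconv N_ge1 fbar; rewrite -/(xbar_defect x N).
have N_gt0 : (0 : R) < N%:R by rewrite ltr0n.
have first_bound : f (xbar x N) <= fbar - rho / (2 * N%:R) * xbar_defect x N.
  rewrite -[f _](@mulKf _ N%:R) ?lt0r_neq0 //.
  have -> : fbar - rho / (2 * N%:R) * xbar_defect x N
          = N%:R^-1 * (\sum_(1 <= i < N.+1) f (x i) - rho / 2 * xbar_defect x N).
    by rewrite /fbar; field; rewrite lt0r_neq0.
  by rewrite ler_pM2l ?invr_gt0 // rho_convex_xbar.
split=> // z; rewrite -mulrDr; set M := Num.max 0 (- rho).
set S := \sum_(1 <= i < N.+1) sqnorm (x i - z) + _.
have defect_le : - rho * xbar_defect x N <= M * (2 * S).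
  apply: (@le_trans _ _ (M * xbar_defect x N)).
    by rewrite ler_wpM2r ?xbar_defect_ge0 // le_max lexx orbT.
  by rewrite ler_wpM2l ?xbar_defect_le // le_max lexx.
apply: le_trans first_bound _; rewrite lerD2l.
have -> : M * (N%:R^-1 * S) = (2 * N%:R)^-1 * (M * (2 * S)).
  by field; rewrite lt0r_neq0.
have -> : - (rho / (2 * N%:R) * xbar_defect x N) = (2 * N%:R)^-1 * (- rho * xbar_defect x N).
  by ring.
by rewrite ler_wpM2l // invr_ge0 mulr_ge0 // ltW.
Qed.
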